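(* Let $X=(X_n)_{n\in\mathbb{Z}}$ be a stationary and ergodic sequence of integer-valued random variables. Then exactly one of the following holds: (1) the record graph of $X$ is almost surely connected; or (2) almost surely every connected component of the record graph of $X$ is finite.
   Context: For a sequence $x=(x_n)_{n\in\mathbb{Z}}$, the record map is $R_x(i)=\inf\{n>i: \sum_{l=i}^{n-1}x_l\ge0\}$ if this set is nonempty, and $R_x(i)=i$ otherwise. The record graph has vertex set $\mathbb{Z}$ and a directed edge $i\to R_x(i)$ whenever $R_x(i)\ne i$; connectivity and components are understood in the undirected sense. *)

From HB Require Import structures.
From mathcomp Require Import all_boot all_order all_algebra.
From mathcomp Require Import all_classical all_reals all_analysis.
From Stdlib Require Import Relations.
Set Implicit Arguments. Unset Strict Implicit. Unset Printing Implicit Defensive.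
Import Order.TTheory GRing.Theory Num.Theory.
Local Open Scope classical_set_scope.
Local Open Scope ring_scope.

Definition psum (x : int -> int) (i n : int) : int :=
  \sum_(k < `|n - i|%N) x (i + k%:Z).

(* [record_edge x i j] : there is a directed edge i -> R_x(i) = j with
   R_x(i) <> i, i.e. the set {n > i : sum_{l=i}^{n-1} x_l >= 0} is nonempty
   and j is its infimum (= its least element). *)
Definition record_edge (x : int -> int) (i j : int) : Prop :=
  [/\ i < j, 0 <= psum x i j &
      forall m : int, i < m -> m < j -> psum x i m < 0].

Definition record_conn (x : int -> int) : relation int :=
  clos_refl_sym_trans int (record_edge x).

Definition record_graph_connected (x : int -> int) : Prop :=
  forall i j : int, record_conn x i j.

Definition record_components_finite (x : int -> int) : Prop :=
  forall i : int, finite_set [set j | record_conn x i j].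

Definition cylinders : set (set (int -> int)) :=
  [set A | exists (n k : int), A = [set y | y n = k]].

Definition path_measurable (A : set (int -> int)) : Prop := <<s cylinders >> A.

Definition shift (y : int -> int) : int -> int := fun n => y (n + 1).

Definition path_of {T : Type} (X : int -> T -> int) (w : T) : int -> int :=
  fun n => X n w.

Definition stationary {d : measure_display} {T : measurableType d}
  {R : realType} (P : probability T R) (X : int -> T -> int) : Prop :=
  forall A, path_measurable A ->
    P (path_of X @^-1` (shift @^-1` A)) = P (path_of X @^-1` A).

Definition ergodic {d : measure_display} {T : measurableType d}
  {R : realType} (P : probability T R) (X : int -> T -> int) : Prop :=
  forall A, path_measurable A -> (shift @^-1` A = A) ->
    P (path_of X @^-1` A) = 0%E \/ P (path_of X @^-1` A) = 1%E.

(* Call i a sink of x when all partial sums x_i + ... + x_(n-1), n > i, are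
   negative, i.e. R_x(i) = i.  No record edge jumps over a sink, so sinks cut
   the record graph; while a vertex i that is not a sink is connected to i + 1.
   Hence the graph is connected when x has no sink, and all its components are
   finite when the sinks of x are unbounded in both directions.  The event
   "no sink" is shift-invariant, so by ergodicity it has probability 0 or 1.
   By stationarity the events "k is the greatest sink", k in Z, are disjoint
   translates of each other with a common probability, which must therefore be
   0; likewise for the least sink.  The two alternatives are exclusive since
   Z is infinite. *)

From Pilot Require Import Defs.
From HB Require Import structures.
From mathcomp Require Import all_boot all_order all_algebra.
From mathcomp Require Import all_classical all_reals all_analysis.
From mathcomp Require Import zify.
From Stdlib Require Import Relations.
Set Implicit Arguments. Unset Strict Implicit. Unset Printing Implicit Defensive.
Import Order.TTheory GRing.Theory Num.Theory.
Local Open Scope classical_set_scope.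
Local Open Scope ring_scope.

(* Otherwise [shift] would resolve to the translation of mathcomp-analysis. *)
Local Notation shift := Defs.shift.

Local Arguments rst_step {A R x y}.
Local Arguments rst_sym {A R x y}.
Local Arguments rst_trans {A R x y z}.

Lemma clos_rst_invariant (A : Type) (e : relation A) (Q : A -> Prop) :
  (forall a b, e a b -> (Q a <-> Q b)) ->
  forall a b, clos_refl_sym_trans A e a b -> (Q a <-> Q b).
Proof.
move=> eQ a b; elim=> [u v /eQ //| u //| u v _ [] | u v w _ [? ?] _ [? ?]];
  by split; auto.
Qed.

Lemma finite_int_interval (a b : int) : finite_set [set j : int | a < j <= b].
Proof.
apply: (@sub_finite_set _ _ ((fun k : nat => a + k%:Z) @` `I_(`|b - a|%N.+1))).
  by move=> j /= /andP[aj jb]; exists `|j - a|%N; rewrite /= /in_mem /=; lia.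
exact/finite_image/finite_II.
Qed.

Lemma infinite_int : ~ finite_set [set: int].
Proof.
move=> fin_int; apply: infinite_nat; rewrite -(preimage_setT Posz).
by apply: finite_preimage => // m n _ _ [].
Qed.

Lemma unbounded_above_of_no_max (Q : set int) r :
  Q r -> (forall k, ~ (Q k /\ ubound Q k)) -> forall k, exists2 n, k < n & Q n.
Proof.
move=> Qr no_max.
have above (m : nat) : exists2 n, r + m%:Z <= n & Q n.
  elim: m => [|m [n rmn Qn]]; first by exists r; rewrite ?addr0.
  have /existsNP[n' /not_implyP[Qn' /negP]] : ~ ubound Q n.
    by move=> ub; exact: no_max n (conj Qn ub).
  by rewrite -ltNge => nn'; exists n' => //; lia.
by move=> k; have [n rn Qn] := above `|k - r|.+1; exists n => //; lia.
Qed.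

Lemma unbounded_below_of_no_min (Q : set int) r :
  Q r -> (forall k, ~ (Q k /\ lbound Q k)) -> forall k, exists2 n, n < k & Q n.
Proof.
move=> Qr no_min.
have below (m : nat) : exists2 n, n <= r - m%:Z & Q n.
  elim: m => [|m [n nrm Qn]]; first by exists r; rewrite ?subr0.
  have /existsNP[n' /not_implyP[Qn' /negP]] : ~ lbound Q n.
    by move=> lb; exact: no_min n (conj Qn lb).
  by rewrite -ltNge => n'n; exists n' => //; lia.
by move=> k; have [n nr Qn] := below `|k - r|.+1; exists n => //; lia.
Qed.

Definition sink (x : int -> int) (i : int) : Prop :=
  forall n, i < n -> psum x i n < 0.

Section record_graph.
Variable x : int -> int.

Lemma psumD i k j : i <= k <= j -> psum x i j = psum x i k + psum x k j.
Proof.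
move=> /andP[ik kj]; rewrite /psum.
have -> : `|j - i|%N = (`|k - i| + `|j - k|)%N by lia.
rewrite big_split_ord /=; congr (_ + _); apply: eq_bigr => l _.
by congr x; lia.
Qed.

Lemma record_edge_exists i n : i < n -> 0 <= psum x i n ->
  exists2 j, j <= n & record_edge x i j.
Proof.
move=> lt_in psum_n.
have offset k : i <= k -> i + `|k - i|%N%:Z = k by lia.
have ex_m : exists m, (0 < m)%N && (0 <= psum x i (i + m%:Z)).
  by exists `|n - i|%N; rewrite (offset n (ltW lt_in)) psum_n andbT; lia.
case: (ex_minnP ex_m) => m /andP[m_gt0 psum_m] min_m.
have m_le : (m <= `|n - i|)%N.
  by apply: min_m; rewrite (offset n (ltW lt_in)) psum_n andbT; lia.
exists (i + m%:Z); first lia.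
split=> [|//|k ik km]; first lia.
rewrite ltNge; apply/negP => psum_k.
have : (m <= `|k - i|)%N.
  by apply: min_m; rewrite (offset k (ltW ik)) psum_k andbT; lia.
lia.
Qed.

Lemma record_edge_le_sink r i j :
  sink x r -> record_edge x i j -> i <= r -> j <= r.
Proof.
move=> sink_r [ij psum_ij min_j] ir; rewrite leNgt; apply/negP => rj.
have := sink_r j rj; rewrite ltNge; apply/negP/negPn.
have [<-//|ne_ir] := eqVneq i r.
have ltir : i < r by rewrite lt_neqAle ne_ir.
rewrite (@psumD i r j) in psum_ij; last by rewrite ir ltW.
by have := min_j r ltir rj; lia.
Qed.

Lemma record_conn_le_sink r a b :
  sink x r -> record_conn x a b -> (a <= r <-> b <= r).
Proof.
move=> sink_r; apply: (@clos_rst_invariant _ _ (fun c => c <= r)) => i j e.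
split=> [|jr].
  exact: record_edge_le_sink e.
by case: e => ij _ _; exact: le_trans (ltW ij) jr.
Qed.

Lemma record_conn_inside_edge i j k : record_edge x i j -> i < k <= j ->
  record_conn x k j.
Proof.
move=> [ij psum_ij min_j]; move def_n : `|j - k|%N => n.
elim/ltn_ind: n k def_n => n IH k def_n /andP[ik kj].
have [->|ne_kj] := eqVneq k j; first exact: rst_refl.
have ltkj : k < j by rewrite lt_neqAle ne_kj.
have psum_kj : 0 <= psum x k j.
  rewrite (@psumD i k j) in psum_ij; last by rewrite kj ltW.
  by have := min_j k ik ltkj; lia.
have [k' k'j e] := record_edge_exists ltkj psum_kj.
have [kk' _ _] := e.
have conn_k'j : record_conn x k' j.
  by apply: (IH `|j - k'|%N) => //; [lia | rewrite k'j andbT (lt_trans ik kk')].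
exact: rst_trans (rst_step e) conn_k'j.
Qed.

Lemma record_conn_succ i : ~ sink x i -> record_conn x i (i + 1).
Proof.
move=> /existsNP[n /not_implyP[lt_in /negP]]; rewrite -leNgt => psum_in.
have [j _ e] := record_edge_exists lt_in psum_in; have [ij _ _] := e.
apply: rst_trans (rst_step e) (rst_sym (record_conn_inside_edge e _)).
lia.
Qed.

Lemma sink_free_connected : (forall i, ~ sink x i) -> record_graph_connected x.
Proof.
move=> sink_free.
have conn_up i (n : nat) : record_conn x i (i + n%:Z).
  elim: n => [|n IH]; first by rewrite addr0; exact: rst_refl.
  apply: rst_trans IH _; rewrite -addn1 PoszD addrA; exact: record_conn_succ.
move=> i j; have [ij|ji] := lerP i j.
  by rewrite (_ : j = i + `|j - i|%N%:Z); [exact: conn_up | lia].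
by rewrite (_ : i = j + `|i - j|%N%:Z); [exact/rst_sym/conn_up | lia].
Qed.

Lemma sinks_unbounded_components_finite :
  (forall k, exists2 n, k < n & sink x n) ->
  (forall k, exists2 n, n < k & sink x n) -> record_components_finite x.
Proof.
move=> sinks_above sinks_below i.
have [a ai sink_a] := sinks_below i; have [b ib sink_b] := sinks_above (i - 1).
apply: sub_finite_set (finite_int_interval a b) => j /= conn_ij.
have [_ ja_ia] := record_conn_le_sink sink_a conn_ij.
have [ib_jb _] := record_conn_le_sink sink_b conn_ij.
apply/andP; split; last by apply: ib_jb; lia.
by rewrite ltNge; apply/negP => /ja_ia; lia.
Qed.

Lemma connected_components_infinite :
  record_graph_connected x -> ~ record_components_finite x.
Proof.
move=> conn fin; apply: infinite_int.
by have := fin 0; congr finite_set; apply/seteqP; split=> // j _; exact: conn.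
Qed.

End record_graph.

Lemma psum_shift (y : int -> int) i n :
  psum (shift y) i n = psum y (i + 1) (n + 1).
Proof.
rewrite /psum (_ : n + 1 - (i + 1) = n - i); last lia.
by apply: eq_bigr => k _; rewrite /shift addrAC.
Qed.

Lemma sink_shift (y : int -> int) : sink (shift y) = [set i | sink y (i + 1)].
Proof.
apply/funext => i; apply/propext; split=> sink_i n lt_n.
  by have := sink_i (n - 1); rewrite psum_shift subrK; apply; lia.
by rewrite psum_shift; apply: sink_i; lia.
Qed.

Definition sink_free : set (int -> int) := [set y | forall i, ~ sink y i].
Definition last_sink (k : int) : set (int -> int) :=
  [set y | sink y k /\ ubound (sink y) k].
Definition first_sink (k : int) : set (int -> int) :=
  [set y | sink y k /\ lbound (sink y) k].

Lemma shift_sink_free : shift @^-1` sink_free = sink_free.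
Proof.
apply/seteqP; split=> y; rewrite /sink_free /= sink_shift /= => free i //.
by rewrite -(subrK 1 i); exact: free.
Qed.

Lemma shift_last_sink k : shift @^-1` last_sink k = last_sink (k + 1).
Proof.
apply/seteqP; split=> y; rewrite /last_sink /= sink_shift /= => -[sink_k ub];
  split=> // n sink_n.
  by have := ub (n - 1); rewrite /= subrK => /(_ sink_n); lia.
by have := ub _ sink_n; lia.
Qed.

Lemma shift_first_sink k : shift @^-1` first_sink k = first_sink (k + 1).
Proof.
apply/seteqP; split=> y; rewrite /first_sink /= sink_shift /= => -[sink_k lb];
  split=> // n sink_n.
  by have := lb (n - 1); rewrite /= subrK => /(_ sink_n); lia.
by have := lb _ sink_n; lia.
Qed.

Lemma last_sink_unique i j y : last_sink i y -> last_sink j y -> i = j.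
Proof.
by move=> [sink_i ub_i] [sink_j ub_j]; apply/le_anti; rewrite ub_i ?ub_j.
Qed.

Lemma first_sink_unique i j y : first_sink i y -> first_sink j y -> i = j.
Proof.
by move=> [sink_i lb_i] [sink_j lb_j]; apply/le_anti; rewrite lb_i ?lb_j.
Qed.

Section measurable_predicates.
Context d (T : measurableType d).

Lemma measurable_prop (p : Prop) : measurable [set _ : T | p].
Proof.
have [/propT->|/propF->] := pselect p; first exact: measurableT.
exact: measurable0.
Qed.

Lemma measurable_imply (A B : set T) :
  measurable A -> measurable B -> measurable [set t | A t -> B t].
Proof.
move=> mA mB; rewrite (_ : [set t | _] = ~` A `|` B).
  exact: measurableU (measurableC mA) mB.
apply/seteqP; split=> t /=; last by case=> [nAt /nAt | Bt _].
by have [At /(_ At)|nAt _] := pselect (A t); [right | left].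
Qed.

Lemma measurable_forall (I : Type) (A : I -> set T) :
  countable [set: I] -> (forall i, measurable (A i)) ->
  measurable [set t | forall i, A i t].
Proof.
move=> cI mA; rewrite -[X in measurable X]setCK; apply: measurableC.
rewrite (_ : ~` _ = \bigcup_i ~` A i).
  by apply: countable_bigcupT_measurable => // i; exact/measurableC.
apply/seteqP; split=> t /=; first by move=> /existsNP[i nAi]; exists i.
by move=> [i _ nAi] all_i; exact: nAi (all_i i).
Qed.

Lemma measurable_exists (I : Type) (A : I -> set T) :
  countable [set: I] -> (forall i, measurable (A i)) ->
  measurable [set t | exists i, A i t].
Proof.
move=> cI mA; rewrite (_ : [set t | _] = \bigcup_i A i).
  exact: countable_bigcupT_measurable.
by apply/seteqP; split=> t /= [i]; exists i.
Qed.

End measurable_predicates.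

(* The σ-algebra type generated by [cylinders] needs [int -> int], hence [int],
   to be pointed. *)
HB.instance Definition _ := isPointed.Build int 0.
Local Notation S := (g_sigma_algebraType cylinders).

Lemma measurable_cylinder n k : measurable ([set y | y n = k] : set S).
Proof. by apply: sub_sigma_algebra; exists n, k. Qed.

Lemma measurable_sum_coord (i : int) (m : nat) (B : set int) :
  measurable [set y : S | B (\sum_(k < m) y (i + k%:Z))].
Proof.
elim: m B => [|m IH] B.
  rewrite (_ : [set y | _] = [set _ | B 0]); first exact: measurable_prop.
  by apply/seteqP; split=> y; rewrite /= big_ord0.
rewrite (_ : [set y | _] = [set y : S | exists v, ([set y | y (i + m%:Z) = v]
    `&` [set y | B (\sum_(k < m) y (i + k%:Z) + v)]) y]).
  apply: measurable_exists (countableP _) _ => v.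
  exact: measurableI (measurable_cylinder _ _) (IH [set s | B (s + v)]).
apply/seteqP; split=> y /=; rewrite big_ord_recr /=.
  by exists (y (i + m%:Z)).
by move=> [v [<-]].
Qed.

Lemma measurable_psum i n (B : set int) : measurable [set y : S | B (psum y i n)].
Proof. exact: measurable_sum_coord. Qed.

Lemma measurable_sink i : measurable [set y : S | sink y i].
Proof.
apply: measurable_forall (countableP _) _ => n.
exact: (measurable_psum i n [set s | i < n -> s < 0]).
Qed.

Lemma measurable_sink_free : measurable (sink_free : set S).
Proof.
apply: measurable_forall (countableP _) _ => i.
by apply: measurableC; exact: measurable_sink.
Qed.

Lemma measurable_last_sink k : measurable (last_sink k : set S).
Proof.
apply: measurableI; first exact: measurable_sink.
apply: measurable_forall (countableP _) _ => n.
by apply: measurable_imply; [exact: measurable_sink | exact: measurable_prop].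
Qed.

Lemma measurable_first_sink k : measurable (first_sink k : set S).
Proof.
apply: measurableI; first exact: measurable_sink.
apply: measurable_forall (countableP _) _ => n.
by apply: measurable_imply; [exact: measurable_sink | exact: measurable_prop].
Qed.

Lemma succ_invariant_const (U : Type) (f : int -> U) :
  (forall k, f (k + 1) = f k) -> forall k, f k = f 0.
Proof.
move=> f_succ.
have f_pos (n : nat) : f n%:Z = f 0.
  by elim: n => // n IH; rewrite -addn1 PoszD f_succ.
have f_neg (n : nat) : f (- n%:Z) = f 0.
  by elim: n => // n IH; rewrite -IH -f_succ -addn1 PoszD opprD subrK.
by case=> n; rewrite ?NegzE.
Qed.

Lemma natmul_le1_eq0 (R : realType) (r : R) :
  0 <= r -> (forall N, r *+ N <= 1) -> r = 0.
Proof.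
rewrite le_eqVlt => /predU1P[<-//|r_gt0] r_le.
have /archi_boundP : 0 <= r^-1 by rewrite invr_ge0 ltW.
rewrite -[r^-1]mulr1 ltr_pdivrMl // mulr_natr => /lt_le_trans/(_ (r_le _)).
by rewrite ltxx.
Qed.

Lemma probability_disjoint_equal_eq0 d (T : measurableType d) (R : realType)
    (P : probability T R) (E : nat -> set T) :
  (forall n, measurable (E n)) -> trivIset setT E ->
  (forall n, P (E n) = P (E 0%N)) -> P (E 0%N) = 0%E.
Proof.
move=> mE tE PE.
have PE_le1 N : (P (E 0%N) *+ N <= 1)%E.
  have <- : (\sum_(i < N) P (E i) = P (E 0%N) *+ N)%E.
    by under eq_bigr do rewrite PE; rewrite sumr_const card_ord.
  rewrite -measure_bigsetU //; apply: probability_le1.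
  by apply: bigsetU_measurable => i _; exact: mE.
have PE0_fin : P (E 0%N) \is a fin_num := fin_num_measure P _ (mE 0%N).
rewrite -(fineK PE0_fin) in PE_le1 *; congr EFin.
apply: natmul_le1_eq0 => [|N]; first exact/fine_ge0/measure_ge0.
by rewrite -lee_fin EFin_natmul.
Qed.

Lemma ae_forall_int d (T : sigmaRingType d) (R : realType)
    (mu : {measure set T -> \bar R}) (Q : int -> T -> Prop) :
  (forall k, {ae mu, forall t, Q k t}) -> {ae mu, forall t, forall k, Q k t}.
Proof.
move=> aeQ; have Qpos := ae_foralln (fun n : nat => aeQ (Posz n)).
have Qneg := ae_foralln (fun n : nat => aeQ (Negz n)).
by apply: filterS2 Qpos Qneg => t Qpos_t Qneg_t [] n.
Qed.

Section probability_events.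
Context d (T : measurableType d) (R : realType) (P : probability T R).

Lemma ae_notin_of_measure0 (A : set T) :
  measurable A -> P A = 0%E -> {ae P, forall t, ~ A t}.
Proof. by move=> mA PA0; apply/negligibleP; rewrite setCK. Qed.

Lemma ae_in_of_probability1 (A : set T) :
  measurable A -> P A = 1%E -> {ae P, forall t, A t}.
Proof.
move=> mA PA1; apply/negligibleP; first exact: measurableC.
by change (P (~` A) = 0); rewrite probability_setC // PA1 subee.
Qed.

Lemma probability_ae_exists (Q : T -> Prop) :
  {ae P, forall t, Q t} -> exists t, Q t.
Proof.
apply: (@filter_ex _ _ (ae_properfilter_algebraOfSetsType _)).
by change (0 < P setT)%E; rewrite probability_setT lte01.
Qed.

End probability_events.

Section stationary_process.
Context d (T : measurableType d) (R : realType) (P : probability T R).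
Variable X : int -> T -> int.
Hypothesis X_measurable : forall n k, measurable (X n @^-1` [set k]).
Hypothesis X_stationary : stationary P X.

Lemma measurable_path_of : measurable_fun setT (path_of X : T -> S).
Proof.
apply: (@measurability _ _ _ _ setT (path_of X : T -> S) cylinders) => //.
move=> _ [_ [n [k ->]] <-].
by rewrite setTI; exact: X_measurable.
Qed.

Lemma measurable_path_preimage (A : set S) :
  measurable A -> measurable (path_of X @^-1` A).
Proof.
by move=> mA; rewrite -[X in measurable X]setTI; exact: measurable_path_of.
Qed.

Lemma ae_path_notin_translates (F : int -> set S) :
  (forall k, measurable (F k)) -> (forall k, shift @^-1` F k = F (k + 1)) ->
  (forall i j y, F i y -> F j y -> i = j) ->
  {ae P, forall w k, ~ F k (path_of X w)}.
Proof.
move=> mF shiftF F_disj.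
have PF_const : forall k, P (path_of X @^-1` F k) = P (path_of X @^-1` F 0).
  apply: (succ_invariant_const (f := fun k => P (path_of X @^-1` F k))) => k.
  by rewrite -shiftF X_stationary; last exact: mF.
have PF0 : P (path_of X @^-1` F 0) = 0%E.
  pose E (n : nat) := path_of X @^-1` F n.
  apply: (probability_disjoint_equal_eq0 (E := E)).
  - by move=> n; exact/measurable_path_preimage.
  - by move=> i j _ _ [w [Fi Fj]]; have [] := F_disj _ _ _ Fi Fj.
  - by move=> n; exact: PF_const.
apply: ae_forall_int => k; apply: ae_notin_of_measure0.
  exact: measurable_path_preimage.
by rewrite PF_const.
Qed.

End stationary_process.

Theorem corollary3p5 (d : measure_display) (T : measurableType d) (R : realType)
  (P : probability T R) (X : int -> T -> int)
  (HX : forall (n k : int), measurable (X n @^-1` [set k]))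
  (Hstat : stationary P X) (Herg : ergodic P X) :
  let C1 := {ae P, forall w, record_graph_connected (path_of X w)} in
  let C2 := {ae P, forall w, record_components_finite (path_of X w)} in
  (C1 \/ C2) /\ ~ (C1 /\ C2).
Proof.
move=> C1 C2; split; last first.
  move=> [conn fin].
  have [w [conn_w fin_w]] := probability_ae_exists (filterI conn fin).
  exact: connected_components_infinite conn_w fin_w.
have mfree := measurable_path_preimage HX measurable_sink_free.
have [free0|free1] := Herg _ measurable_sink_free shift_sink_free; [right | left].
- have no_last := ae_path_notin_translates HX Hstat measurable_last_sink
    shift_last_sink last_sink_unique.
  have no_first := ae_path_notin_translates HX Hstat measurable_first_sink
    shift_first_sink first_sink_unique.
  apply: filterS3 (ae_notin_of_measure0 mfree free0) no_last no_first.
  move=> w /existsNP[r /contrapT sink_r] nl nf.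
  apply: sinks_unbounded_components_finite.
    exact: unbounded_above_of_no_max sink_r nl.
  exact: unbounded_below_of_no_min sink_r nf.
- apply: filterS (ae_in_of_probability1 mfree free1) => w.
  exact: sink_free_connected.
Qed.
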